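(* Let $A\in\mathbb{R}^{m\times n}$, $a\in\mathbb{R}^{1\times n}$, $c_A\in\mathbb{R}^m$, $c_a\in\mathbb{R}$, and let \[ P=\{x\in\mathbb{R}^n : Ax=c_A,\ ax=c_a,\ x\ge 0\},\qquad P_{\bar A}=\{(x,s)\in\mathbb{R}^n\times\mathbb{R} : Ax=c_A,\ ax+s=c_a,\ x\ge 0,\ s\ge 0\}. \] Then $d(P_{\bar A})\le d(A)+d(P)+2$.
   Context: The combinatorial diameter $d(P)$ of a polyhedron $P$ is the maximum, over all pairs of vertices, of the minimum number of edges in an edge walk in $P$ between them. For a matrix $M\in\mathbb{R}^{m\times n}$, $d(M):=\max\{d(\{x: Mx=r,\ x\ge 0\}) : r\in\mathbb{R}^m\}$. *)

From mathcomp Require Import all_boot all_order all_algebra.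
From mathcomp Require Import reals.
Set Implicit Arguments. Unset Strict Implicit. Unset Printing Implicit Defensive.
Import Order.TTheory GRing.Theory Num.Theory.
Local Open Scope ring_scope.

Section Polyhedra.
Variable R : realType.

Definition pset (n : nat) := 'cV[R]_n -> Prop.

Definition lin (n : nat) (c : 'rV[R]_n) (x : 'cV[R]_n) : R := (c *m x) 0 0.

Definition is_vertex (n : nat) (S : pset n) (v : 'cV[R]_n) : Prop :=
  S v /\ exists c : 'rV[R]_n, forall x, S x ->
    lin c x <= lin c v /\ (lin c x = lin c v -> x = v).

Definition is_edge (n : nat) (S : pset n) (u v : 'cV[R]_n) : Prop :=
  u <> v /\ is_vertex S u /\ is_vertex S v /\
  exists c : 'rV[R]_n, lin c u = lin c v /\ forall x, S x ->
    lin c x <= lin c u /\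
    (lin c x = lin c u -> exists t : R, 0 <= t <= 1 /\ x = (1 - t) *: u + t *: v).

Fixpoint walk (n : nat) (S : pset n) (u : 'cV[R]_n) (p : seq 'cV[R]_n)
  (v : 'cV[R]_n) : Prop :=
  match p with
  | [::] => u = v
  | w :: p' => is_edge S u w /\ walk S w p' v
  end.

Definition diam_le (n : nat) (S : pset n) (k : nat) : Prop :=
  forall u v, is_vertex S u -> is_vertex S v ->
    exists p : seq 'cV[R]_n, (size p <= k)%N /\ walk S u p v.

Definition std_poly (m n : nat) (M : 'M[R]_(m, n)) (r : 'cV[R]_m) : pset n :=
  fun x => M *m x = r /\ forall i, 0 <= x i 0.

(* d(M) <= k : d({x : Mx = r, x >= 0}) <= k for every right-hand side r *)
Definition mat_diam_le (m n : nat) (M : 'M[R]_(m, n)) (k : nat) : Prop :=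
  forall r : 'cV[R]_m, diam_le (std_poly M r) k.

Definition P_poly (m n : nat) (A : 'M[R]_(m, n)) (a : 'rV[R]_n)
  (cA : 'cV[R]_m) (ca : R) : pset n :=
  fun x => A *m x = cA /\ lin a x = ca /\ forall i, 0 <= x i 0.

Definition PAbar_poly (m n : nat) (A : 'M[R]_(m, n)) (a : 'rV[R]_n)
  (cA : 'cV[R]_m) (ca : R) : pset (n + 1) :=
  fun y => let x := usubmx y in let s := dsubmx y 0 0 in
    A *m x = cA /\ lin a x + s = ca /\ (forall i, 0 <= x i 0) /\ 0 <= s.

End Polyhedra.

From mathcomp Require Import all_boot all_order all_algebra.
From mathcomp Require Import reals.
From mathcomp Require Import ring lra zify.
From Stdlib Require Import Classical.
Set Implicit Arguments. Unset Strict Implicit. Unset Printing Implicit Defensive.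
Import Order.TTheory GRing.Theory Num.Theory.
Local Open Scope ring_scope.

(* Vertices and edges of a polyhedron {x in L | x >= 0}, with L affine, are
   recognised through supports: y is a vertex iff no other point of L has its
   support inside that of y, and likewise for edges.  Hence the vertices of
   P_Abar are the points (x, c_a - a x) where x is either a vertex of P (zero
   slack) or a vertex of Q = {x | A x = c_A, x >= 0} strictly below the
   hyperplane a x = c_a.  Edges of P, and edges of Q below the hyperplane, lift
   to edges of P_Abar, while an edge of Q crossing the hyperplane gives an edge
   of P_Abar ending at a vertex of P; so a walk of Q between lower vertices can
   be rerouted through P at the price of d(P) more edges.  A vertex v of P that
   is not a vertex of Q lies inside a one-dimensional face of Q; the ratio test
   along that face reaches a vertex of Q which is either above the hyperplane,
   so that a walk of Q towards it crosses into P, or below it and joined to v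
   by an edge of P_Abar.  The argument even gives d(A) + d(P) + 1. *)

Section Orthant.
Variables (R : realType) (N : nat).
Implicit Types (x y z : 'cV[R]_N) (c : 'rV[R]_N).

Definition nonneg x := forall i, 0 <= x i 0.

Definition aff (t : R) x y := (1 - t) *: x + t *: y.

Definition supp_sub z y := forall i, y i 0 = 0 -> z i 0 = 0.

Definition neg_ind (T : pred 'I_N) : 'rV[R]_N := \row_i (if T i then -1 else 0).

Lemma linD c x y : lin c (x + y) = lin c x + lin c y.
Proof. by rewrite /lin mulmxDr mxE. Qed.

Lemma linZ c t x : lin c (t *: x) = t * lin c x.
Proof. by rewrite /lin -scalemxAr mxE. Qed.

Lemma linN c x : lin c (- x) = - lin c x.
Proof. by rewrite /lin mulmxN mxE. Qed.

Lemma lin_aff c t x y : lin c (aff t x y) = lin c x + t * (lin c y - lin c x).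
Proof. rewrite /aff linD !linZ; ring. Qed.

Lemma aff_entry t x y i : aff t x y i 0 = x i 0 + t * (y i 0 - x i 0).
Proof. rewrite /aff !mxE; ring. Qed.

Lemma aff_subl t x y : aff t x y - x = t *: (y - x).
Proof. by apply/matrixP => i j; rewrite !mxE; ring. Qed.

Lemma aff_aff s t x y : aff s x (aff t x y) = aff (s * t) x y.
Proof. by apply/matrixP => i j; rewrite !mxE; ring. Qed.

Lemma nonneg_aff t x y : 0 <= t <= 1 -> nonneg x -> nonneg y -> nonneg (aff t x y).
Proof.
by case/andP=> t0 t1 nx ny i; rewrite /aff !mxE addr_ge0 ?mulr_ge0 ?subr_ge0.
Qed.

Lemma lin_neg_ind_le0 T x : nonneg x -> lin (neg_ind T) x <= 0.
Proof.
move=> nx; rewrite /lin mxE; apply: sumr_le0 => i _; rewrite mxE.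
by case: (T i); rewrite ?mul0r // mulN1r oppr_le0.
Qed.

Lemma lin_neg_ind_eq0 T x : nonneg x ->
  lin (neg_ind T) x = 0 <-> forall i, T i -> x i 0 = 0.
Proof.
move=> nx; rewrite /lin mxE.
have termE i : neg_ind T 0 i * x i 0 = - (if T i then x i 0 else 0).
  by rewrite mxE; case: (T i); rewrite ?mulN1r ?mul0r ?oppr0.
rewrite (eq_bigr _ (fun i _ => termE i)) sumrN; split.
  move/eqP; rewrite oppr_eq0 => /eqP /psumr_eq0P sum0 i Ti.
  have terms_ge0 j : true -> 0 <= (if T j then x j 0 else 0) by case: (T j).
  by have := sum0 terms_ge0 i isT; rewrite Ti.
by move=> x0; rewrite big1 ?oppr0 // => i _; case: ifP => // /x0.
Qed.

Lemma radius_forall_fin (Pr : 'I_N -> R -> Prop) :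
  (forall i, exists2 e, 0 < e & forall t, `|t| <= e -> Pr i t) ->
  exists2 e, 0 < e & forall i t, `|t| <= e -> Pr i t.
Proof.
move=> radius_i.
suff [e e0 He] : exists2 e, 0 < e &
    forall i, i \in enum 'I_N -> forall t, `|t| <= e -> Pr i t.
  by exists e => // i t; apply: He; rewrite mem_enum.
elim: (enum 'I_N) => [|j s [e e0 He]]; first by exists 1.
have [ej ej0 Hj] := radius_i j.
exists (Num.min e ej) => [|i]; first by rewrite lt_min e0 ej0.
rewrite inE => /orP [/eqP -> | i_s] t; rewrite le_min => /andP [te tej].
  exact: Hj.
exact: He.
Qed.

Lemma radius_ge0_addr (r d : R) : 0 <= r -> (r = 0 -> d = 0) ->
  exists2 e, 0 < e & forall t, `|t| <= e -> 0 <= r + t * d.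
Proof.
move=> r_ge0 r0d0; have [r0|rn0] := eqVneq r 0.
  by exists 1 => // t _; rewrite r0 r0d0 // mulr0 addr0.
have r_gt0 : 0 < r by rewrite lt_def rn0.
exists (r / (`|d| + 1)); first by rewrite divr_gt0 // ltr_wpDl.
move=> t ht; rewrite -lerBlDl sub0r lerNl.
apply: le_trans (ler_norm _) _; rewrite normrN normrM.
apply: le_trans (ler_wpM2r (normr_ge0 d) ht) _.
rewrite mulrAC ler_pdivrMr ?ltr_wpDl // ler_wpM2l ?ltW //; lra.
Qed.

Lemma radius_nonneg_aff x z : nonneg x -> supp_sub z x ->
  exists2 e, 0 < e & forall t, `|t| <= e -> nonneg (aff t x z).
Proof.
move=> nx sz.
have [e e0 He] : exists2 e, 0 < e &
    forall i t, `|t| <= e -> 0 <= x i 0 + t * (z i 0 - x i 0).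
  apply: radius_forall_fin => i; apply: radius_ge0_addr (nx i) _ => xi0.
  by rewrite xi0 (sz i xi0) subrr.
by exists e => // t ht i; rewrite aff_entry; apply: He.
Qed.

End Orthant.

Arguments neg_ind {R N} T.

Lemma mulmx_aff (R : realType) m n t (B : 'M[R]_(m, n)) x y :
  B *m aff t x y = aff t (B *m x) (B *m y).
Proof. by rewrite /aff mulmxDr -!scalemxAr. Qed.

Section StandardFormFaces.
Variables (R : realType) (N : nat) (S L : pset R N).
Hypothesis S_def : forall z, S z <-> L z /\ nonneg z.
Hypothesis L_aff : forall t x y, L x -> L y -> L (aff t x y).

(* [S] extends on both sides of [y] along [z - y], so a linear form maximal
   at [y] is constant in that direction. *)
Lemma supp_sub_max_lin_eq c y z : S y -> (forall x, S x -> lin c x <= lin c y) ->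
  L z -> supp_sub z y -> lin c z = lin c y /\ exists2 e, 0 < e & S (aff e y z).
Proof.
move=> Sy cmax Lz zy; have [Ly ny] := (S_def y).1 Sy.
have [e e0 He] := radius_nonneg_aff ny zy.
have S_aff t : `|t| <= e -> S (aff t y z).
  by move=> te; apply/S_def; split; [apply: L_aff | apply: He].
have Se : S (aff e y z) by apply: S_aff; rewrite ger0_norm // ltW.
have Sne : S (aff (- e) y z) by apply: S_aff; rewrite normrN ger0_norm // ltW.
split; last by exists e.
have := cmax _ Se; have := cmax _ Sne; rewrite !lin_aff !gerDl mulNr oppr_le0.
rewrite pmulr_rge0 // pmulr_rle0 // => h1 h2.
by apply/eqP; rewrite -subr_eq0 eq_le h1 h2.
Qed.

Lemma vertex_supp_sub_eq y z : is_vertex S y -> L z -> supp_sub z y -> z = y.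
Proof.
move=> [Sy [c cmax]] Lz zy.
have [czy [e e0 Se]] := supp_sub_max_lin_eq Sy (fun x Sx => (cmax x Sx).1) Lz zy.
have := (cmax _ Se).2; rewrite lin_aff czy subrr mulr0 addr0 => /(_ erefl) eq_y.
have /eqP : e *: (z - y) = 0 by rewrite -aff_subl eq_y subrr.
by rewrite scaler_eq0 (gt_eqF e0) subr_eq0 => /eqP.
Qed.

Lemma vertex_of_supp_sub y :
  S y -> (forall z, S z -> supp_sub z y -> z = y) -> is_vertex S y.
Proof.
move=> Sy y_min; split => //; exists (neg_ind (fun i => y i 0 == 0)) => x Sx.
have [_ nx] := (S_def x).1 Sx; have [_ ny] := (S_def y).1 Sy.
have -> : lin (neg_ind (fun i => y i 0 == 0)) y = 0.
  by apply/lin_neg_ind_eq0 => // i /eqP.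
split; first exact: lin_neg_ind_le0.
by move/lin_neg_ind_eq0 => /(_ nx) x0; apply: y_min => // i /eqP; apply: x0.
Qed.

Lemma edge_supp_sub_seg u v z : is_edge S u v -> S z ->
  (forall i, u i 0 = 0 -> v i 0 = 0 -> z i 0 = 0) ->
  exists t : R, 0 <= t <= 1 /\ z = (1 - t) *: u + t *: v.
Proof.
move=> [_ [[Su _] [[Sv _] [c [cuv cmax]]]]] Sz zuv.
have [Lu nu] := (S_def u).1 Su; have [Lv nv] := (S_def v).1 Sv.
pose w := aff (1 / 2) u v.
have Sw : S w.
  apply/S_def; split; first exact: L_aff.
  by apply: nonneg_aff => //; rewrite divr_ge0 //= ler_pdivrMr ?mul1r ?ler1n.
have cw : lin c w = lin c u by rewrite lin_aff cuv subrr mulr0 addr0.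
have zw : supp_sub z w.
  move=> i; rewrite aff_entry => w0; apply: zuv; have := nu i; have := nv i; lra.
have cmax_w x : S x -> lin c x <= lin c w by rewrite cw => /cmax [].
have [cz _] := supp_sub_max_lin_eq Sw cmax_w ((S_def z).1 Sz).1 zw.
by apply: (cmax z Sz).2; rewrite cz.
Qed.

Lemma edge_of_supp_sub_seg u v : u <> v -> is_vertex S u -> is_vertex S v ->
  (forall z, S z -> (forall i, u i 0 = 0 -> v i 0 = 0 -> z i 0 = 0) ->
     exists t : R, 0 <= t <= 1 /\ z = (1 - t) *: u + t *: v) ->
  is_edge S u v.
Proof.
move=> uv Vu Vv seg_uv; do 3!split => //.
have [_ nu] := (S_def u).1 Vu.1; have [_ nv] := (S_def v).1 Vv.1.
pose T i := (u i 0 == 0) && (v i 0 == 0).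
have cu : lin (neg_ind T) u = 0 by apply/lin_neg_ind_eq0 => // i /andP [/eqP].
have cv : lin (neg_ind T) v = 0 by apply/lin_neg_ind_eq0 => // i /andP [_ /eqP].
exists (neg_ind T); rewrite cu cv; split => // x Sx.
have [_ nx] := (S_def x).1 Sx.
split; first exact: lin_neg_ind_le0.
move/lin_neg_ind_eq0 => /(_ nx) x0; apply: seg_uv => // i u0 v0.
by apply: x0; rewrite /T u0 v0 !eqxx.
Qed.

End StandardFormFaces.

Section Walks.
Variables (R : realType) (N : nat) (S : pset R N).
Implicit Types (u v w : 'cV[R]_N) (p q : seq 'cV[R]_N).

Lemma edge_sym u v : is_edge S u v -> is_edge S v u.
Proof.
move=> [uv [Vu [Vv [c [cuv cmax]]]]]; split; first by move/esym.
do 2!split => //; exists c; split => // x Sx; rewrite -cuv; have [cx cx_seg] := cmax x Sx.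
split => // /cx_seg [t [/andP [t0 t1] ->]]; exists (1 - t).
split; first by apply/andP; split; lra.
by apply/matrixP => i j; rewrite !mxE; ring.
Qed.

Lemma walk_cat u p w q v : walk S u p w -> walk S w q v -> walk S u (p ++ q) v.
Proof. by elim: p u => [|x p IH] u /= => [-> | [uv W] /(IH _ W)]. Qed.

Lemma walk_catP u p q v :
  walk S u (p ++ q) v -> walk S u p (last u p) /\ walk S (last u p) q v.
Proof.
by elim: p u => [|x p IH] u //= [ux /IH [W1 W2]].
Qed.

Lemma walk_rev u p v : walk S u p v -> walk S v (rev (belast u p)) u.
Proof.
elim: p u => [|x p IH] u /= => [-> // | [ux /IH W]].
by rewrite rev_cons -cats1; apply: walk_cat W _; split => //; apply: edge_sym.
Qed.

Lemma walk_map M (T : pset R M) (f : 'cV[R]_N -> 'cV[R]_M) (D : pred 'cV[R]_N) :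
  (forall x y, is_edge S x y -> D x -> D y -> is_edge T (f x) (f y)) ->
  forall u p v, D u -> all D p -> walk S u p v -> walk T (f u) (map f p) (f v).
Proof.
move=> f_edge u p; elim: p u => [|x p IH] u v Du //=; first by move=> _ ->.
by case/andP=> Dx Dp [ux W]; split; [apply: f_edge | apply: IH].
Qed.

Lemma diam_leW k k' : (k <= k')%N -> diam_le S k -> diam_le S k'.
Proof.
move=> kk' dS u v Vu Vv; have [p [sp W]] := dS u v Vu Vv.
by exists p; split => //; apply: leq_trans kk'.
Qed.

End Walks.

Section Slack.
Variables (R : realType) (m n : nat).
Variables (A : 'M[R]_(m, n)) (a : 'rV[R]_n) (cA : 'cV[R]_m) (ca : R).
Implicit Types (x y z q v : 'cV[R]_n).

Local Notation Q := (std_poly A cA).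
Local Notation P := (P_poly A a cA ca).
Local Notation PA := (PAbar_poly A a cA ca).

Definition add_slack x : 'cV[R]_(n + 1) := col_mx x (const_mx (ca - lin a x)).

Lemma usubmx_add_slack x : usubmx (add_slack x) = x.
Proof. exact: col_mxKu. Qed.

Lemma dsubmx_add_slack x : dsubmx (add_slack x) 0 0 = ca - lin a x.
Proof. by rewrite col_mxKd mxE. Qed.

Lemma add_slack_inj : injective add_slack.
Proof. by move=> x y /(congr1 usubmx); rewrite !usubmx_add_slack. Qed.

Lemma add_slack_lshift x j : add_slack x (lshift 1 j) 0 = x j 0.
Proof. exact: col_mxEu. Qed.

Lemma add_slack_rshift x : add_slack x (rshift n ord0) 0 = ca - lin a x.
Proof. by rewrite col_mxEd mxE. Qed.

Lemma add_slack_aff t x y : add_slack (aff t x y) = aff t (add_slack x) (add_slack y).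
Proof.
rewrite /aff /add_slack !scale_col_mx add_col_mx; congr col_mx.
by apply/matrixP => i j; rewrite !mxE lin_aff; ring.
Qed.

Lemma ord_split_ind (F : 'I_(n + 1) -> Prop) :
  (forall j, F (lshift 1 j)) -> F (rshift n ord0) -> forall i, F i.
Proof.
move=> Fl Fr i; case: (splitP i) => [j ij | k].
  by have -> : i = lshift 1 j by apply: val_inj.
by rewrite (ord1 k) => ik; have -> : i = rshift n ord0 by apply: val_inj.
Qed.

Lemma nonneg_add_slack x : nonneg (add_slack x) <-> nonneg x /\ lin a x <= ca.
Proof.
split => [nx | [nx ax]].
  by split=> [j|]; [rewrite -add_slack_lshift | rewrite -subr_ge0 -add_slack_rshift].
by apply: ord_split_ind => [j|]; rewrite ?add_slack_lshift ?add_slack_rshift ?subr_ge0.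
Qed.

Lemma PA_add_slackE x : PA (add_slack x) <-> Q x /\ lin a x <= ca.
Proof.
rewrite /PAbar_poly usubmx_add_slack dsubmx_add_slack subr_ge0 addrC subrK.
by split=> [[Ax [_ [nx ax]]] | [[Ax nx] ax]].
Qed.

Lemma PA_ex_add_slack (y : 'cV[R]_(n + 1)) :
  PA y -> exists2 x, y = add_slack x & Q x /\ lin a x <= ca.
Proof.
move=> PAy; exists (usubmx y).
  have [_ [ax _]] := PAy; rewrite -[LHS]vsubmxK /add_slack; congr (col_mx _ _).
  by apply/matrixP => i j; rewrite !ord1 [RHS]mxE -ax addrAC subrr add0r.
by case: PAy => Ax [<- [nx s0]]; rewrite lerDl.
Qed.

Lemma supp_sub_add_slack z x :
  supp_sub (add_slack z) (add_slack x) <-> supp_sub z x /\ (lin a x = ca -> lin a z = ca).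
Proof.
have slack0 y : (ca - lin a y = 0) <-> (lin a y = ca).
  by split=> [/eqP | ->]; rewrite ?subrr // subr_eq0 => /eqP.
split=> [zx | [zx axz]].
  split=> [j|]; first by have := zx (lshift 1 j); rewrite !add_slack_lshift.
  by move/slack0; have := zx (rshift n ord0); rewrite !add_slack_rshift => h /h /slack0.
apply: ord_split_ind => [j|]; rewrite ?add_slack_lshift ?add_slack_rshift; first exact: zx.
by move/slack0/axz/slack0.
Qed.

(* The affine sets cut by the orthant out of [Q], [P] and [PA]; [LPA] is
   phrased through [add_slack] to make its affineness immediate. *)
Definition LQ x := A *m x = cA.
Definition LP x := A *m x = cA /\ lin a x = ca.
Definition LPA (y : 'cV[R]_(n + 1)) := y = add_slack (usubmx y) /\ LQ (usubmx y).

Lemma Q_def x : Q x <-> LQ x /\ nonneg x. Proof. by []. Qed.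

Lemma P_def x : P x <-> LP x /\ nonneg x.
Proof. by split=> [[? [? ?]] | [[? ?] ?]]. Qed.

Lemma PA_def (y : 'cV[R]_(n + 1)) : PA y <-> LPA y /\ nonneg y.
Proof.
split=> [/PA_ex_add_slack [x -> [[Ax nx] ax]] | [[yE LQy] ny]].
  by rewrite /LPA usubmx_add_slack; split=> //; apply/nonneg_add_slack.
move: ny; rewrite yE => /nonneg_add_slack [nx ax]; exact/PA_add_slackE.
Qed.

Lemma LPA_add_slack x : LQ x -> LPA (add_slack x).
Proof. by rewrite /LPA usubmx_add_slack. Qed.

Lemma LQ_aff t x y : LQ x -> LQ y -> LQ (aff t x y).
Proof. by rewrite /LQ mulmx_aff => -> ->; rewrite /aff -scalerDl subrK scale1r. Qed.

Lemma LP_aff t x y : LP x -> LP y -> LP (aff t x y).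
Proof.
by move=> [Ax ax] [Ay ay]; split; [apply: LQ_aff | rewrite lin_aff ax ay subrr mulr0 addr0].
Qed.

Lemma LPA_aff t (y y' : 'cV[R]_(n + 1)) : LPA y -> LPA y' -> LPA (aff t y y').
Proof.
move=> [yE Ly] [y'E Ly']; rewrite yE y'E -add_slack_aff /LPA usubmx_add_slack.
by split=> //; apply: LQ_aff.
Qed.

Lemma vertex_add_slack_Q x : is_vertex Q x -> lin a x <= ca -> is_vertex PA (add_slack x).
Proof.
move=> Vx ax; apply: (vertex_of_supp_sub PA_def); first by apply/PA_add_slackE; case: Vx.
move=> _ /PA_ex_add_slack [z -> [[Az _] _]] /supp_sub_add_slack [zx _].
by rewrite (vertex_supp_sub_eq Q_def LQ_aff Vx Az zx).
Qed.

Lemma vertex_add_slack_P x : is_vertex P x -> is_vertex PA (add_slack x).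
Proof.
move=> Vx; have [[Ax [ax nx]] _] := Vx.
apply: (vertex_of_supp_sub PA_def); first by apply/PA_add_slackE; rewrite ax.
move=> _ /PA_ex_add_slack [z -> [[Az _] _]] /supp_sub_add_slack [zx /(_ ax) az].
by rewrite (vertex_supp_sub_eq P_def LP_aff Vx (conj Az az) zx).
Qed.

Lemma vertex_P_of_Q x : is_vertex Q x -> lin a x = ca -> is_vertex P x.
Proof.
move=> Vx ax; have [[Ax nx] _] := Vx.
apply: (vertex_of_supp_sub P_def) => [|z [Az _] zx]; first by split.
exact: (vertex_supp_sub_eq Q_def LQ_aff Vx Az zx).
Qed.

Lemma vertex_add_slack_cases x : is_vertex PA (add_slack x) ->
  is_vertex P x /\ lin a x = ca \/ is_vertex Q x /\ lin a x < ca.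
Proof.
move=> V; have /PA_add_slackE [[Ax nx] ax] := V.1.
have supp_eq z : LQ z -> supp_sub z x -> (lin a x = ca -> lin a z = ca) -> z = x.
  move=> Az zx axz; apply: add_slack_inj.
  apply: (vertex_supp_sub_eq PA_def LPA_aff V); first exact: LPA_add_slack.
  exact/supp_sub_add_slack.
have [ax_lt | ax_ge] := ltrP (lin a x) ca.
  right; split=> //; apply: (vertex_of_supp_sub Q_def) => // z [Az _] zx.
  by apply: supp_eq => // axE; move: ax_lt; rewrite axE ltxx.
have axE : lin a x = ca by apply/eqP; rewrite eq_le ax ax_ge.
left; split=> //; apply: (vertex_of_supp_sub P_def) => [|z [Az [az _]] zx]; first by split.
exact: supp_eq.
Qed.

Lemma lin_row0_add_slack c x : lin (row_mx c (0 : 'rV[R]_1)) (add_slack x) = lin c x.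
Proof. by rewrite /lin mul_row_col mul0mx addr0. Qed.

(* The face of [PA] exposed by [row_mx c 0] is the part of the edge [q q'] of [Q]
   below the hyperplane, i.e. the segment from [q] to [aff s q q']. *)
Lemma edge_add_slack_Q_aff q q' s : is_edge Q q q' -> 0 < s <= 1 -> lin a q <= ca ->
  (forall t, 0 <= t <= 1 -> lin a (aff t q q') <= ca -> t <= s) ->
  is_vertex PA (add_slack (aff s q q')) ->
  is_edge PA (add_slack q) (add_slack (aff s q q')).
Proof.
move=> [qq' [Vq [_ [c [cqq' cmax]]]]] /andP [s0 s1] aq below_s Vw.
split.
  move/add_slack_inj/eqP; rewrite eq_sym -subr_eq0 aff_subl scaler_eq0 (gt_eqF s0).
  by rewrite subr_eq0 => /eqP/esym.
split; first exact: vertex_add_slack_Q.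
split=> //; exists (row_mx c 0).
rewrite !lin_row0_add_slack lin_aff -cqq' subrr mulr0 addr0.
split=> // _ /PA_ex_add_slack [x -> [Qx ax]]; rewrite lin_row0_add_slack.
have [cx seg] := cmax x Qx; split=> // /seg [t [t01 xE]].
have ts : t <= s by apply: below_s; rewrite // /aff -xE.
exists (t / s); split.
  by case/andP: t01 => t0 _; rewrite divr_ge0 ?(ltW s0) //= ler_pdivrMr // mul1r.
rewrite -/(aff (t / s) (add_slack q) (add_slack (aff s q q'))) -add_slack_aff.
by rewrite aff_aff divfK ?gt_eqF // xE.
Qed.

Lemma edge_add_slack_Q q q' : is_edge Q q q' -> lin a q <= ca -> lin a q' <= ca ->
  is_edge PA (add_slack q) (add_slack q').
Proof.
move=> E aq aq'; have aff1 : aff 1 q q' = q' by rewrite /aff subrr scale0r add0r scale1r.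
rewrite -aff1; apply: edge_add_slack_Q_aff => //; first by rewrite ltr01 lexx.
  by move=> t /andP [].
by rewrite aff1; apply: vertex_add_slack_Q => //; case: E => _ [_ []].
Qed.

Lemma edge_add_slack_P x x' : is_edge P x x' -> is_edge PA (add_slack x) (add_slack x').
Proof.
move=> E; have [xx' [Vx [Vx' _]]] := E.
have [[_ [ax _]] _] := Vx; have [[_ [ax' _]] _] := Vx'.
apply: (edge_of_supp_sub_seg PA_def); first by move/add_slack_inj.
- exact: vertex_add_slack_P.
- exact: vertex_add_slack_P.
move=> _ /PA_ex_add_slack [z -> [[Az nz] _]] zxx'.
have az : lin a z = ca.
  have := zxx' (rshift n ord0); rewrite !add_slack_rshift ax ax' subrr.
  by move=> /(_ erefl erefl) /eqP; rewrite subr_eq0 => /eqP.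
have [t [t01 zE]] : exists t : R, 0 <= t <= 1 /\ z = (1 - t) *: x + t *: x'.
  apply: (edge_supp_sub_seg P_def LP_aff E) => // j.
  by have := zxx' (lshift 1 j); rewrite !add_slack_lshift.
by exists t; split=> //; rewrite zE add_slack_aff.
Qed.

Lemma crossing_vertex_P q q' t : is_edge Q q q' -> 0 <= t <= 1 ->
  lin a q != lin a q' -> lin a (aff t q q') = ca -> is_vertex P (aff t q q').
Proof.
move=> E t01 aqq' awE; have [_ [[[Aq nq] _] [[[Aq' nq'] _] _]]] := E.
apply: (vertex_of_supp_sub P_def).
  by split; [exact: LQ_aff | split; [exact: awE | exact: nonneg_aff]].
move=> z [Az [az nz]] zw.
have [tz [_ zE]] : exists tz : R, 0 <= tz <= 1 /\ z = (1 - tz) *: q + tz *: q'.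
  apply: (edge_supp_sub_seg Q_def LQ_aff E) => // i qi q'i.
  by apply: zw; rewrite aff_entry qi q'i subrr mulr0 addr0.
have tzE : tz = t.
  move: az; rewrite -awE zE -/(aff tz q q') !lin_aff => /addrI /mulIf; apply.
  by rewrite subr_eq0 eq_sym.
by rewrite zE tzE.
Qed.

Lemma crossing_edge q q' : is_edge Q q q' -> lin a q < ca < lin a q' ->
  exists2 w, is_vertex P w & is_edge PA (add_slack q) (add_slack w).
Proof.
move=> E /andP [aq aq']; pose D := lin a q' - lin a q.
have D0 : 0 < D by rewrite subr_gt0 (lt_trans aq aq').
pose t := (ca - lin a q) / D.
have tD : t * D = ca - lin a q by rewrite divfK ?gt_eqF.
have t0 : 0 < t by rewrite divr_gt0 // subr_gt0.
have t1 : t <= 1 by rewrite ler_pdivrMr // mul1r lerD2r ltW.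
have awE : lin a (aff t q q') = ca by rewrite lin_aff tD addrC subrK.
have Vw : is_vertex P (aff t q q').
  by apply: crossing_vertex_P; rewrite ?(ltW t0) ?t1 ?awE // lt_eqF // (lt_trans aq aq').
exists (aff t q q') => //; apply: edge_add_slack_Q_aff; rewrite ?t0 ?t1 ?(ltW aq) //.
  move=> tau _ ataw; rewrite -(ler_pM2r D0) tD; move: ataw; rewrite lin_aff /D; lra.
exact: vertex_add_slack_P.
Qed.

Lemma crossing_walk q q' : is_edge Q q q' -> lin a q <= ca < lin a q' ->
  exists w p, [/\ is_vertex P w, (size p <= 1)%N & walk PA (add_slack q) p (add_slack w)].
Proof.
move=> E /andP [aq aq']; have [aq_lt | aq_ge] := ltrP (lin a q) ca.
  have [w Vw Ew] := crossing_edge E (introT andP (conj aq_lt aq')).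
  by exists w, [:: add_slack w].
exists q, [::]; split=> //; apply: vertex_P_of_Q; first by case: E => _ [].
by apply/eqP; rewrite eq_le aq aq_ge.
Qed.

Lemma first_crossing q0 (p : seq 'cV[R]_n) qk :
  walk Q q0 p qk -> lin a q0 <= ca -> ca < lin a qk ->
  exists w p', [/\ is_vertex P w, (size p' <= size p)%N
                & walk PA (add_slack q0) p' (add_slack w)].
Proof.
elim: p q0 => [|q1 p IH] q0 /=; first by move=> -> /le_lt_trans h /h; rewrite ltxx.
move=> [E W] aq0 aqk; have [aq1 | aq1] := lerP (lin a q1) ca.
  have [w [p' [Vw sp' W']]] := IH q1 W aq1 aqk.
  by exists w, (add_slack q1 :: p'); split=> //; split=> //; apply: edge_add_slack_Q.
have [w [p' [Vw sp' W']]] := crossing_walk E (introT andP (conj aq0 aq1)).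
by exists w, p'; split=> //; apply: leq_trans sp' _.
Qed.

Definition ker_line x e := forall f, A *m f = 0 /\ supp_sub f x <-> exists l, f = l *: e.

Lemma P_vertex_ker_eq0 v f : is_vertex P v ->
  A *m f = 0 -> supp_sub f v -> lin a f = 0 -> f = 0.
Proof.
move=> Vv Af fv af; have [[Av [av _]] _] := Vv.
suff : v + f = v by move/(congr1 (fun y => y - v)); rewrite addrC addKr subrr.
apply: (vertex_supp_sub_eq P_def LP_aff Vv).
  by split; [rewrite /LQ mulmxDr Av Af addr0 | rewrite linD av af addr0].
by move=> i vi; rewrite !mxE vi (fv i vi) addr0.
Qed.

Lemma P_vertex_ker_line v z : is_vertex P v -> Q z -> supp_sub z v -> z <> v ->
  exists e, [/\ ker_line v e, lin a e != 0 & exists j, e j 0 < 0].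
Proof.
move=> Vv [Az nz] zv zv_neq; have [[Av _] _] := Vv.
pose d := z - v.
have Ad : A *m d = 0 by rewrite mulmxBr Az Av subrr.
have dv : supp_sub d v by move=> i vi; rewrite !mxE vi (zv i vi) subrr.
have ad : lin a d != 0.
  by apply/eqP => /(P_vertex_ker_eq0 Vv Ad dv) /eqP; rewrite subr_eq0 => /eqP.
have line_d : ker_line v d.
  move=> f; split=> [[Af fv] | [l ->]]; last first.
    split; first by rewrite -scalemxAr Ad scaler0.
    by move=> i /dv di; rewrite mxE di mulr0.
  exists (lin a f / lin a d); apply/eqP; rewrite -subr_eq0; apply/eqP.
  apply: (P_vertex_ker_eq0 Vv).
  - by rewrite mulmxBr Af -scalemxAr Ad scaler0 subrr.
  - by move=> i vi; rewrite 3!mxE (fv i vi) (dv i vi) mulr0 subrr.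
  - by rewrite linD linN linZ divfK // subrr.
have [i [j dij]] : exists i j, d i j != 0.
  by apply/matrix0Pn; rewrite subr_eq0; apply/eqP.
rewrite (ord1 j) in dij; have [di_lt0 | di_ge0] := ltrP (d i 0) 0.
  by exists d; split=> //; exists i.
exists (- d); split.
- move=> f; rewrite line_d.
  by split=> -[l ->]; exists (- l); rewrite scaleNr scalerN ?opprK.
- by rewrite linN oppr_eq0.
- by exists i; rewrite mxE oppr_lt0 lt_def dij.
Qed.

Lemma ker_line_self v e : ker_line v e -> A *m e = 0 /\ supp_sub e v.
Proof. by move=> line_e; apply/line_e; exists 1; rewrite scale1r. Qed.

(* The ratio test: as [e] spans the only direction of [Q] inside the support
   of [v], the first point of the ray [v + t e] where a coordinate vanishes is
   a vertex of [Q]. *)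
Lemma ratio_test_vertex v e j : Q v -> ker_line v e -> e j 0 < 0 ->
  exists ts i0,
    [/\ 0 < ts, e i0 0 < 0, (v + ts *: e) i0 0 = 0 & is_vertex Q (v + ts *: e)].
Proof.
move=> [Av nv] line_e ej; have [Ae ev] := ker_line_self line_e.
have [i0 ei0 ratio_min] :=
  @arg_minP _ R _ j (fun i => e i 0 < 0) (fun i => v i 0 / - e i 0) ej.
pose ts := v i0 0 / - e i0 0.
have vi0 : 0 < v i0 0.
  by rewrite lt_def nv andbT; apply: contraTneq ei0 => /ev ->; rewrite ltxx.
have ts0 : 0 < ts by rewrite divr_gt0 // oppr_gt0.
have tsE : ts * - e i0 0 = v i0 0 by rewrite divfK // oppr_eq0 lt_eqF.
have qi0 : (v + ts *: e) i0 0 = 0 by rewrite !mxE -tsE; ring.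
have nq : nonneg (v + ts *: e).
  move=> i; rewrite !mxE; have [ei_lt0 | ei_ge0] := ltrP (e i 0) 0.
    by have := ratio_min i ei_lt0; rewrite -/ts ler_pdivlMr ?oppr_gt0 //; nra.
  by rewrite addr_ge0 // mulr_ge0 // ltW.
have Qq : Q (v + ts *: e) by split=> //; rewrite mulmxDr -scalemxAr Ae scaler0 addr0.
exists ts, i0; split=> //; apply: (vertex_of_supp_sub Q_def) => // z [Az nz] zq.
have zv : supp_sub z v by move=> i vi; apply: zq; rewrite !mxE vi (ev i vi) mulr0 addr0.
have [l zE] : exists l, z - v = l *: e.
  apply/line_e; split; first by rewrite mulmxBr Az Av subrr.
  by move=> i vi; rewrite !mxE vi (zv i vi) subrr.
have l_ts : l = ts.
  have := congr1 (fun y => y i0 0) zE; rewrite /= !mxE (zq i0 qi0).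
  move: qi0; rewrite !mxE => qi0 zi0.
  by apply: (mulIf (negbT (lt_eqF ei0))); lra.
by rewrite -l_ts -zE addrC subrK.
Qed.

Lemma edge_add_slack_ratio v e ts i0 : is_vertex P v -> ker_line v e -> lin a e < 0 ->
  0 < ts -> e i0 0 < 0 -> (v + ts *: e) i0 0 = 0 -> is_vertex Q (v + ts *: e) ->
  is_edge PA (add_slack (v + ts *: e)) (add_slack v).
Proof.
move=> Vv line_e ae ts0 ei0 qi0 Vq; have [[Av [av nv]] _] := Vv.
have [Ae ev] := ker_line_self line_e.
have aq : lin a (v + ts *: e) < ca by rewrite linD linZ av gtrDl pmulr_rlt0.
apply: (edge_of_supp_sub_seg PA_def).
- by move/add_slack_inj => qv; move: aq; rewrite qv av ltxx.
- exact: vertex_add_slack_Q (ltW aq).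
- exact: vertex_add_slack_P.
move=> _ /PA_ex_add_slack [x -> [[Ax nx] ax]] xqv.
have xv : supp_sub x v.
  move=> i vi; have := xqv (lshift 1 i); rewrite !add_slack_lshift; apply=> //.
  by rewrite !mxE vi (ev i vi) mulr0 addr0.
have [l xE] : exists l, x - v = l *: e.
  apply/line_e; split; first by rewrite mulmxBr Ax Av subrr.
  by move=> i vi; rewrite !mxE vi (xv i vi) subrr.
have {xE} xE : x = v + l *: e by rewrite -xE addrC subrK.
have l0 : 0 <= l by move: ax; rewrite xE linD linZ av gerDl; nra.
have lts : l <= ts by have := nx i0; move: qi0; rewrite xE !mxE; nra.
exists (1 - l / ts); split.
  by rewrite subr_ge0 gerBl divr_ge0 ?(ltW ts0) // andbT ler_pdivrMr // mul1r.
have -> : x = aff (1 - l / ts) (v + ts *: e) v.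
  by apply/matrixP => i k; rewrite xE !mxE; field; rewrite gt_eqF.
by rewrite add_slack_aff.
Qed.

Variables kA kP : nat.
Hypothesis diamQ : diam_le Q kA.
Hypothesis diamP : diam_le P kP.

Lemma walk_P_vertices x y : is_vertex P x -> is_vertex P y ->
  exists p, (size p <= kP)%N /\ walk PA (add_slack x) p (add_slack y).
Proof.
move=> Vx Vy; have [p [sp W]] := diamP Vx Vy.
exists (map add_slack p); rewrite size_map; split=> //.
apply: (walk_map (D := predT)) W => //; last exact: all_predT.
by move=> u v E _ _; apply: edge_add_slack_P.
Qed.

(* A walk of [Q] leaving the half-space is cut at a vertex above the
   hyperplane; each half is replaced by its part up to the first crossing, and
   the two crossing points are joined inside [P]. *)
Lemma walk_Q_vertices x y : is_vertex Q x -> lin a x <= ca ->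
  is_vertex Q y -> lin a y <= ca ->
  exists p, (size p <= kA + kP)%N /\ walk PA (add_slack x) p (add_slack y).
Proof.
move=> Vx ax Vy ay; have [p [sp W]] := diamQ Vx Vy.
case: (boolP (has (fun z => ca < lin a z) p)) => [/hasP [z zp az] | /hasPn p_le].
  move: W sp; case/splitPr: zp => p1 p2; rewrite -cat_rcons => /walk_catP [].
  rewrite last_rcons => W1 /walk_rev W2; rewrite size_cat size_rcons => sp.
  have [w [p1' [Vw s1 W1']]] := first_crossing W1 ax az.
  have [w' [p2' [Vw' s2 W2']]] := first_crossing W2 ay az.
  have [pw [spw Ww]] := walk_P_vertices Vw Vw'.
  exists (p1' ++ pw ++ rev (belast (add_slack y) p2')); split.
    by move: s1 s2; rewrite !size_cat !size_rev !size_belast size_rcons; lia.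
  by apply: walk_cat W1' _; apply: walk_cat Ww _; apply: walk_rev.
exists (map add_slack p); split; first by rewrite size_map; lia.
apply: (walk_map (D := fun z => lin a z <= ca) edge_add_slack_Q) W => //.
by apply/allP => z /p_le; rewrite -leNgt.
Qed.

Lemma walk_Q_P_vertices x y : is_vertex Q x -> lin a x <= ca -> is_vertex P y ->
  exists p, (size p <= kA + kP + 1)%N /\ walk PA (add_slack x) p (add_slack y).
Proof.
move=> Vx ax Vy; have [[Ay [ay ny]] _] := Vy.
case: (classic (exists z, [/\ Q z, supp_sub z y & z <> y])); last first.
  move=> no_z; have Vy' : is_vertex Q y.
    apply: (vertex_of_supp_sub Q_def) => // z Qz zy.
    by case: (eqVneq z y) => // /eqP zy_neq; case: no_z; exists z.
  have ay_le : lin a y <= ca by rewrite ay.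
  have [p [sp W]] := walk_Q_vertices Vx ax Vy' ay_le.
  by exists p; split=> //; lia.
case=> z [Qz zy zy_neq]; have [e [line_e ae [j ej]]] := P_vertex_ker_line Vy Qz zy zy_neq.
have [ts [i0 [ts0 ei0 qi0 Vq]]] := ratio_test_vertex (conj Ay ny) line_e ej.
have aq : lin a (y + ts *: e) = ca + ts * lin a e by rewrite linD linZ ay.
move: ae; rewrite neq_lt => /orP [ae_lt0 | ae_gt0].
  have aq_le : lin a (y + ts *: e) <= ca by rewrite aq gerDl pmulr_rle0 // ltW.
  have [p [sp W]] := walk_Q_vertices Vx ax Vq aq_le.
  exists (rcons p (add_slack y)); split; first by rewrite size_rcons; lia.
  rewrite -cats1; apply: walk_cat W _; split=> //.
  exact: edge_add_slack_ratio Vy line_e ae_lt0 ts0 ei0 qi0 Vq.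
have [p [sp W]] := diamQ Vx Vq.
have aq_gt : ca < lin a (y + ts *: e) by rewrite aq ltrDl mulr_gt0.
have [w [p1 [Vw s1 W1]]] := first_crossing W ax aq_gt.
have [p2 [s2 W2]] := walk_P_vertices Vw Vy.
exists (p1 ++ p2); split; first by rewrite size_cat; lia.
exact: walk_cat W1 W2.
Qed.

Lemma diam_PAbar : diam_le PA (kA + kP + 1).
Proof.
move=> u v Vu Vv.
have [x uE _] := PA_ex_add_slack Vu.1; have [y vE _] := PA_ex_add_slack Vv.1.
subst u v.
case: (vertex_add_slack_cases Vu) => [[Px ax] | [Qx ax]];
  case: (vertex_add_slack_cases Vv) => [[Py ay] | [Qy ay]].
- by have [p [sp W]] := walk_P_vertices Px Py; exists p; split=> //; lia.
- have [p [sp W]] := walk_Q_P_vertices Qy (ltW ay) Px.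
  exists (rev (belast (add_slack y) p)); rewrite size_rev size_belast.
  by split=> //; apply: walk_rev.
- exact: walk_Q_P_vertices Qx (ltW ax) Py.
- by have [p [sp W]] := walk_Q_vertices Qx (ltW ax) Qy (ltW ay); exists p; split=> //; lia.
Qed.

End Slack.

Theorem theorem2 (R : realType) (m n : nat) (A : 'M[R]_(m, n)) (a : 'rV[R]_n)
  (cA : 'cV[R]_m) (ca : R) (kA kP : nat) :
  mat_diam_le A kA ->
  diam_le (P_poly A a cA ca) kP ->
  diam_le (PAbar_poly A a cA ca) (kA + kP + 2).
Proof.
move=> diamA diamP; apply: diam_leW (diam_PAbar (diamA cA) diamP).
by rewrite leq_add2l.
Qed.
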